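(* Let $(A,\mathfrak m)$ be a Noetherian local ring with infinite residue field, $I$ an $\mathfrak m$-primary ideal, and $M$ a finitely generated $A$-module with $\dim M = 1$. Let $b$ be a positive integer such that $IM \subseteq \mathfrak m^b M$. Then $h_{\overline{G_I(M)}}(0) \ge b$, where $\overline{G_I(M)} = G_I(M)/H^0_{G_+}(G_I(M))$.
   Context: $G = \bigoplus_{n\ge0} I^n/I^{n+1}$, $G_+ = \bigoplus_{n>0}I^n/I^{n+1}$, $G_I(M) = \bigoplus_{n\ge0} I^nM/I^{n+1}M$ is the associated graded module, and for a graded $G$-module $F$, $h_F(t) = \ell(F_t)$ denotes the length of its degree-$t$ component. *)

From HB Require Import structures.
From mathcomp Require Import all_boot all_order all_algebra.
Set Implicit Arguments. Unset Strict Implicit. Unset Printing Implicit Defensive.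
Import Order.TTheory GRing.Theory Num.Theory.
Local Open Scope ring_scope.

Section CommAlg.
Variable A : comNzRingType.

Definition is_ideal (I : A -> Prop) : Prop :=
  [/\ I 0, (forall x y, I x -> I y -> I (x + y)) & (forall a x, I x -> I (a * x))].

Definition sub_ideal (I J : A -> Prop) : Prop := forall x, I x -> J x.

Definition gen_ideal (s : seq A) (x : A) : Prop :=
  exists c : seq A, size c = size s /\ x = \sum_(i < size s) c`_i * s`_i.

Definition finitely_generated_ideal (I : A -> Prop) : Prop :=
  exists s : seq A, forall x, I x <-> gen_ideal s x.

Definition noetherian_ring : Prop :=
  forall I, is_ideal I -> finitely_generated_ideal I.

Definition proper_ideal (I : A -> Prop) : Prop := is_ideal I /\ ~ I 1.

Definition maximal_ideal (m : A -> Prop) : Prop :=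
  proper_ideal m /\
  forall J, proper_ideal J -> sub_ideal m J -> forall x, J x <-> m x.

Definition prime_ideal (P : A -> Prop) : Prop :=
  proper_ideal P /\ forall x y, P (x * y) -> P x \/ P y.

Definition local_ring (m : A -> Prop) : Prop :=
  maximal_ideal m /\ forall n, maximal_ideal n -> forall x, n x <-> m x.

(* the residue field A/m is infinite: no finite list of elements meets
   every residue class *)
Definition infinite_residue_field (m : A -> Prop) : Prop :=
  forall s : seq A, exists a : A, forall x, x \in s -> ~ m (a - x).

(* I is m-primary: sqrt(I) = m (with m maximal this forces I to be primary) *)
Definition primary_to (I m : A -> Prop) : Prop :=
  is_ideal I /\ forall x, m x <-> exists n : nat, I (x ^+ n).

Definition ideal_mul (I J : A -> Prop) (x : A) : Prop :=
  exists s : seq (A * A),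
    (forall p, p \in s -> I p.1 /\ J p.2) /\ x = \sum_(p <- s) p.1 * p.2.

Fixpoint ideal_pow (I : A -> Prop) (n : nat) : A -> Prop :=
  match n with
  | 0 => fun _ => True
  | n'.+1 => ideal_mul (ideal_pow I n') I
  end.

Variable M : lmodType A.

Definition is_submod (N : M -> Prop) : Prop :=
  [/\ N 0, (forall x y, N x -> N y -> N (x + y)) & (forall a x, N x -> N (a *: x))].

Definition mod_mul (J : A -> Prop) (N : M -> Prop) (x : M) : Prop :=
  exists s : seq (A * M),
    (forall p, p \in s -> J p.1 /\ N p.2) /\ x = \sum_(p <- s) p.1 *: p.2.

Definition finitely_generated_module : Prop :=
  exists s : seq M, forall x : M, mod_mul (fun _ => True) (fun y => y \in s) x.

Definition ann_mod (a : A) : Prop := forall x : M, a *: x = 0.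

(* there is a chain of primes P_0 < P_1 < ... < P_n containing Ann(M),
   i.e. a chain of length n in Supp M = V(Ann M) *)
Definition supp_chain (n : nat) : Prop :=
  exists P : nat -> A -> Prop,
    (forall i, (i <= n)%N -> prime_ideal (P i) /\ sub_ideal ann_mod (P i)) /\
    (forall i, (i < n)%N -> sub_ideal (P i) (P i.+1) /\
                            exists x, P i.+1 x /\ ~ P i x).

Definition dim_mod_eq (d : nat) : Prop := supp_chain d /\ ~ supp_chain d.+1.

Definition ssub_mod (N1 N2 : M -> Prop) : Prop :=
  (forall x, N1 x -> N2 x) /\ exists x, N2 x /\ ~ N1 x.

(* length of the quotient module M / W is at least n:
   there is a strict chain of n+1 submodules of M between W and M
   (submodules of M/W correspond to submodules of M containing W) *)
Definition quot_length_ge (W : M -> Prop) (n : nat) : Prop :=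
  exists N : nat -> M -> Prop,
    (forall i, (i <= n)%N -> is_submod (N i) /\ forall x, W x -> N i x) /\
    (forall i, (i < n)%N -> ssub_mod (N i) (N i.+1)).

(* The degree-0 component of H^0_{G_+}(G_I(M)), lifted to M:
   x + IM in G_0 = M/IM is killed by a power of G_+ iff, for some k,
   for all n >= k, I^n x subset I^{n+1} M  (G_+^k = \bigoplus_{n>=k} G_n). *)
Definition H0_deg0_lift (I : A -> Prop) (x : M) : Prop :=
  exists k : nat, forall n : nat, (k <= n)%N ->
    forall a : A, ideal_pow I n a ->
      mod_mul (ideal_pow I n.+1) (fun _ => True) (a *: x).

(* h_{\bar G}(0) >= b where \bar G = G_I(M)/H^0_{G_+}(G_I(M)):
   \bar G_0 = (M/IM)/(H^0)_0 = M / H0_deg0_lift I  (note IM lies in it) *)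
Definition hbar0_ge (I : A -> Prop) (b : nat) : Prop :=
  quot_length_ge (fun x => mod_mul I (fun _ => True) x \/ H0_deg0_lift I x) b.

End CommAlg.

From Pilot Require Import Defs.
From HB Require Import structures.
From mathcomp Require Import all_boot all_order all_algebra.
From Stdlib Require Import Classical ClassicalEpsilon.
From mathcomp Require Import zify.
Set Implicit Arguments. Unset Strict Implicit. Unset Printing Implicit Defensive.
Import Order.TTheory GRing.Theory Num.Theory.
Local Open Scope ring_scope.

(* Suppose the chain [H + m^(b-i) M] (0 <= i <= b), with [H] the degree-0 lift of
   H^0_{G_+}(G_I(M)), is not strict at some step, i.e. m^j M <= H + m^(j+1) M for some
   j < b.  Choose generators of m^j M and n so large that I^n sends their H-parts into
   I^(n+1) M <= I^n m^b M <= I^n m^(j+1) M.  Then R := I^n m^j M satisfies R <= m R, so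
   R = 0 by Nakayama.  Since I is m-primary, every element of m then has a power
   annihilating M, so Supp M = {m}, contradicting dim M >= 1. *)

Local Notation total := (fun _ => True).

Lemma bound_over_seq (T : eqType) (s : seq T) (Q : T -> nat -> Prop) :
  (forall u k k', (k <= k')%N -> Q u k -> Q u k') ->
  (forall u, u \in s -> exists k, Q u k) -> exists k, forall u, u \in s -> Q u k.
Proof.
move=> Qmono; elim: s => [|v s IH] Hs; first by exists 0%N.
have [k1 h1] := IH (fun w ws => Hs w (mem_behead (ws : w \in behead (v :: s)))).
have [k2 h2] := Hs v (mem_head _ _).
exists (maxn k1 k2) => w; rewrite inE => /orP [/eqP -> | ws].
  by apply: Qmono h2; rewrite leq_maxr.
by apply: (Qmono _ k1); [rewrite leq_maxl | apply: h1].
Qed.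

Section Ideals.
Variable A : comNzRingType.
Implicit Types (I J K P m : A -> Prop) (x y : A).

Lemma ideal_mul_ind I J (Pr : A -> Prop) :
  Pr 0 -> (forall x y, Pr x -> Pr y -> Pr (x + y)) ->
  (forall a b, I a -> J b -> Pr (a * b)) ->
  forall x, ideal_mul I J x -> Pr x.
Proof.
move=> P0 PD Pg x [s [Hs ->]]; rewrite big_seq.
by apply: big_ind => // p /Hs [Ip Jp]; apply: Pg.
Qed.

Lemma ideal_mul_single I J a b : I a -> J b -> ideal_mul I J (a * b).
Proof.
move=> Ia Jb; exists [:: (a, b)]; split; last by rewrite big_seq1.
by move=> p; rewrite inE => /eqP ->.
Qed.

Lemma ideal_mul_ideal I J : is_ideal J -> is_ideal (ideal_mul I J).
Proof.
move=> [_ _ JM]; split.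
- by exists [::]; rewrite big_nil.
- move=> x y [s [Hs ->]] [t [Ht ->]]; exists (s ++ t); split; last by rewrite big_cat.
  by move=> p; rewrite mem_cat => /orP [] ?; [apply: Hs | apply: Ht].
- move=> c x [s [Hs ->]]; exists [seq (p.1, c * p.2) | p <- s]; split.
    by move=> _ /mapP [p ps ->]; have [Ip Jp] := Hs p ps; split=> //; apply: JM.
  by rewrite big_map mulr_sumr; apply: eq_bigr => p _; rewrite mulrCA.
Qed.

Lemma ideal_pow_ideal I n : is_ideal I -> is_ideal (ideal_pow I n).
Proof. by case: n => [|n] HI /=; [split | apply: ideal_mul_ideal]. Qed.

Lemma ideal_pow_exp I x n : I x -> ideal_pow I n (x ^+ n).
Proof. by move=> Ix; elim: n => [|n IH] //=; rewrite exprSr; apply: ideal_mul_single. Qed.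

Lemma ideal_powS I n x : is_ideal I -> ideal_pow I n.+1 x -> ideal_pow I n x.
Proof.
move=> HI; have [K0 KD KM] := ideal_pow_ideal n HI.
by apply: ideal_mul_ind => // a b Ia _; rewrite mulrC; apply: KM.
Qed.

Lemma ideal_pow_decr I n k x :
  is_ideal I -> (n <= k)%N -> ideal_pow I k x -> ideal_pow I n x.
Proof.
move=> HI /subnK <-; elim: (k - n)%N => [|d IH] // Hx.
by apply: IH; apply: ideal_powS; rewrite addSn in Hx.
Qed.

Lemma gen_ideal_mem (s : seq A) v : v \in s -> gen_ideal s v.
Proof.
move=> vs; exists [seq (i == index v s)%:R | i <- iota 0 (size s)].
rewrite size_map size_iota; split=> //.
have iv : (index v s < size s)%N by rewrite index_mem.
rewrite (bigD1 (Ordinal iv)) //= big1 ?addr0.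
  by rewrite (nth_map 0%N) ?size_iota // nth_iota // add0n eqxx mul1r nth_index.
move=> i /negbTE ne; rewrite (nth_map 0%N) ?size_iota // nth_iota // add0n.
suff -> : (i == index v s :> nat) = false by rewrite mul0r.
by apply/negbTE; apply: contraFN ne => /eqP h; apply/eqP/val_inj.
Qed.

Lemma gen_ideal_sub K (s : seq A) x :
  is_ideal K -> (forall v, v \in s -> K v) -> gen_ideal s x -> K x.
Proof.
move=> [K0 KD KM] Ks [c [_ ->]]; apply: big_ind => // i _.
by apply: KM; apply: Ks; apply: mem_nth.
Qed.

Lemma prime_ideal_pow P x k : prime_ideal P -> P (x ^+ k) -> P x.
Proof.
move=> [[_ P1] Pmul]; elim: k => [|k IH]; first by rewrite expr0.
by rewrite exprSr => /Pmul [/IH|].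
Qed.

Lemma noetherian_chain_stable (c : nat -> A -> Prop) :
  noetherian_ring A -> (forall n, is_ideal (c n)) ->
  (forall n, sub_ideal (c n) (c n.+1)) -> exists N, sub_ideal (c N.+1) (c N).
Proof.
move=> Hn cI cS.
have cmono n k : (n <= k)%N -> sub_ideal (c n) (c k).
  by move/subnK <-; elim: (k - n)%N => [|d IH] // x /IH; rewrite addSn; apply: cS.
pose U x := exists n, c n x.
have UI : is_ideal U.
  split.
  - by exists 0%N; case: (cI 0%N).
  - move=> x y [n1 h1] [n2 h2]; exists (maxn n1 n2).
    have [_ cD _] := cI (maxn n1 n2); apply: cD.
    + by apply: cmono h1; rewrite leq_maxl.
    + by apply: cmono h2; rewrite leq_maxr.
  - by move=> a x [n h]; exists n; have [_ _ cM] := cI n; apply: cM.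
have [s Hs] := Hn U UI.
have [N HN] : exists N, forall v, v \in s -> c N v.
  apply: bound_over_seq => [v k k' /cmono|v vs]; first exact.
  by apply/Hs/gen_ideal_mem.
by exists N => x Hx; apply: gen_ideal_sub (cI N) HN _; apply/Hs; exists N.+1.
Qed.

Lemma proper_ideal_sub_local m J :
  noetherian_ring A -> local_ring m -> Defs.proper_ideal J -> sub_ideal J m.
Proof.
move=> Hn [_ Hloc] HJ.
pose S K := Defs.proper_ideal K /\ sub_ideal J K.
have [[K [[PK JK] Kmax]] | Hno] := classic (exists K, S K /\
    forall K', S K' -> sub_ideal K K' -> sub_ideal K' K).
  move=> x /JK Kx; apply: (Hloc K _ x).1 => //; split=> // J' PJ' KJ' y.
  by split; [apply: Kmax => //; split=> // z /JK /KJ' | apply: KJ'].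
(* Otherwise S has no maximal element, and dependent choice yields a strictly
   ascending chain in S. *)
have step (K : {K | S K}) : {K' : {K | S K} |
    sub_ideal (sval K) (sval K') /\ exists x, sval K' x /\ ~ sval K x}.
  case: K => [K SK]; apply: constructive_indefinite_description.
  apply: NNPP => nostep; apply: Hno; exists K; split=> // K' SK' KK' x K'x.
  by apply: NNPP => nKx; apply: nostep; exists (exist _ K' SK'); split=> //; exists x.
pose next (C : {K | S K}) := sval (step C).
pose J0 : {K | S K} := exist S J (conj HJ (fun x h => h)).
pose c n := sval (iter n next J0).
have cS n : S (c n) by exact: proj2_sig.
have [N HN] := noetherian_chain_stable Hn (fun n => (cS n).1.1)
  (fun n => (proj2_sig (step _)).1).
by have [x [/HN x1 []]] := (proj2_sig (step (iter N next J0))).2.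
Qed.

Lemma local_unit_1B m z :
  noetherian_ring A -> local_ring m -> m z -> exists e, e * (1 - z) = 1.
Proof.
move=> Hn Hl mz; apply: NNPP => nu.
have J_proper : Defs.proper_ideal (fun x => exists e, x = e * (1 - z)).
  split; last by move=> [e he]; apply: nu; exists e.
  split; first by exists 0; rewrite mul0r.
  - by move=> x y [e1 ->] [e2 ->]; exists (e1 + e2); rewrite mulrDl.
  - by move=> a x [e ->]; exists (a * e); rewrite mulrA.
have m1z : m (1 - z).
  by apply: (proper_ideal_sub_local Hn Hl J_proper); exists 1; rewrite mul1r.
have [[[[_ mD _] m1] _] _] := Hl.
by apply: m1; have := mD _ _ m1z mz; rewrite subrK.
Qed.

End Ideals.

Section Modules.
Variables (A : comNzRingType) (M : lmodType A).
Implicit Types (I J K L : A -> Prop) (N : M -> Prop) (x y z : M).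

Lemma mod_mul_single J N a v : J a -> N v -> mod_mul J N (a *: v).
Proof.
move=> Ja Nv; exists [:: (a, v)]; split; last by rewrite big_seq1.
by move=> p; rewrite inE => /eqP ->.
Qed.

Lemma mod_mul_submod J N : is_ideal J -> is_submod (mod_mul J N).
Proof.
move=> [_ _ JM]; split.
- by exists [::]; rewrite big_nil.
- move=> x y [s [Hs ->]] [t [Ht ->]]; exists (s ++ t); split; last by rewrite big_cat.
  by move=> p; rewrite mem_cat => /orP [] ?; [apply: Hs | apply: Ht].
- move=> c x [s [Hs ->]]; exists [seq (c * p.1, p.2) | p <- s]; split.
    by move=> _ /mapP [p ps ->]; have [Jp Np] := Hs p ps; split=> //; apply: JM.
  by rewrite big_map scaler_sumr; apply: eq_bigr => p _; rewrite scalerA.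
Qed.

Lemma submod_sum (Q : M -> Prop) (T : Type) (r : seq T) (P : pred T) (F : T -> M) :
  is_submod Q -> (forall i, P i -> Q (F i)) -> Q (\sum_(i <- r | P i) F i).
Proof. by move=> [Q0 QD _] QF; apply: big_ind. Qed.

Lemma mod_mul_sub J N (Q : M -> Prop) : is_submod Q ->
  (forall a v, J a -> N v -> Q (a *: v)) -> forall x, mod_mul J N x -> Q x.
Proof.
move=> [Q0 QD _] QJN x [s [Hs ->]]; rewrite big_seq.
by apply: big_ind => // p /Hs [Jp Np]; apply: QJN.
Qed.

Lemma mod_mul_mono J J' N x :
  (forall a, J a -> J' a) -> mod_mul J N x -> mod_mul J' N x.
Proof.
move=> JJ' [s [Hs ->]]; exists s; split=> // p /Hs [Jp Np].
by split=> //; apply: JJ'.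
Qed.

Definition mod_add N1 N2 x := exists w z, x = w + z /\ N1 w /\ N2 z.

Lemma mod_add_submod N1 N2 : is_submod N1 -> is_submod N2 -> is_submod (mod_add N1 N2).
Proof.
move=> [N10 N1D N1Z] [N20 N2D N2Z]; split.
- by exists 0, 0; rewrite addr0.
- move=> _ _ [w1 [z1 [-> [h1 k1]]]] [w2 [z2 [-> [h2 k2]]]].
  by exists (w1 + w2), (z1 + z2); rewrite addrACA; split=> //; split; auto.
- move=> a _ [w [z [-> [h k]]]].
  by exists (a *: w), (a *: z); rewrite scalerDr; split=> //; split; auto.
Qed.

Definition lin_comb J (s : seq M) x :=
  exists c : M -> A, (forall u, J (c u)) /\ x = \sum_(u <- s) c u *: u.

Lemma lin_comb_submod J s : is_ideal J -> is_submod (lin_comb J s).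
Proof.
move=> [J0 JD JM]; split.
- by exists (fun _ => 0); split=> //; rewrite big1 // => u _; rewrite scale0r.
- move=> _ _ [c [Jc ->]] [d [Jd ->]]; exists (fun u => c u + d u); split=> [u|]; first exact: JD.
  by rewrite -big_split; apply: eq_bigr => u _; rewrite scalerDl.
- move=> a _ [c [Jc ->]]; exists (fun u => a * c u); split=> [u|]; first exact: JM.
  by rewrite scaler_sumr; apply: eq_bigr => u _; rewrite scalerA.
Qed.

Lemma lin_comb_scale J s a x :
  (forall c, J (a * c)) -> lin_comb total s x -> lin_comb J s (a *: x).
Proof.
move=> Ja [c [_ ->]]; exists (fun u => a * c u); split=> //.
by rewrite scaler_sumr; apply: eq_bigr => u _; rewrite scalerA.
Qed.

Lemma lin_comb_mem s v : uniq s -> v \in s -> lin_comb total s v.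
Proof.
move=> us vs; exists (fun u => if u == v then 1 else 0); split=> //.
rewrite (big_rem v) //= eqxx scale1r big_seq big1 ?addr0 // => u.
by case: eqP => [-> | _]; [rewrite mem_rem_uniqF | rewrite scale0r].
Qed.

Lemma lin_comb_zero J s x : (forall v, v \in s -> v = 0) -> lin_comb J s x -> x = 0.
Proof. by move=> s0 [c [_ ->]]; rewrite big_seq big1 // => u /s0 ->; rewrite scaler0. Qed.

Lemma mod_mul_fg_span K :
  finitely_generated_ideal K -> finitely_generated_module M ->
  exists S : seq M, (forall x, mod_mul K total x -> lin_comb total S x) /\
                    (forall v, v \in S -> mod_mul K total v).
Proof.
move=> [t Kt] [g Hg]; exists (undup [seq a *: v | a <- t, v <- g]).
set S := undup _.
have S_submod : is_submod (lin_comb total S) by apply: lin_comb_submod.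
have [_ _ SZ] := S_submod.
split.
- apply: (mod_mul_sub S_submod) => a w /Kt [c [_ ->]] _.
  have [s [Hs ->]] := Hg w.
  rewrite scaler_suml; apply: submod_sum => // i _; rewrite scaler_sumr big_seq.
  apply: submod_sum => // p /Hs [_ pg].
  rewrite scalerA -mulrA [t`_i * _]mulrC mulrA -scalerA; apply: SZ.
  apply: lin_comb_mem; first exact: undup_uniq.
  by rewrite mem_undup; apply/allpairsP; exists (t`_i, p.2); rewrite mem_nth.
- move=> v; rewrite mem_undup => /allpairsP [[a w] [/= aIt wg ->]].
  by apply: mod_mul_single => //; apply/Kt; apply: gen_ideal_mem.
Qed.

Lemma mod_mul_ideal_mul_sub I J N (Q : M -> Prop) x : is_submod Q ->
  (forall a b v, I a -> J b -> N v -> Q (a *: (b *: v))) ->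
  mod_mul (ideal_mul I J) N x -> Q x.
Proof.
move=> Qsub QIJ; have [Q0 QD _] := Qsub.
apply: mod_mul_sub x => // c v IJc Nv; move: c IJc.
apply: ideal_mul_ind => [|c c' Qc Qc'|a b Ia Jb]; first by rewrite scale0r.
  by rewrite scalerDl; apply: QD.
by rewrite -scalerA; apply: QIJ.
Qed.

Lemma mod_mul_scale_mul J K L a z : is_ideal L -> J a ->
  mod_mul (ideal_mul K L) total z -> mod_mul L (mod_mul (ideal_mul J K) total) (a *: z).
Proof.
move=> HL Ja [s [Hs ->]]; rewrite scaler_sumr big_seq.
have Qsub := mod_mul_submod (mod_mul (ideal_mul J K) total) HL.
apply: submod_sum => // p /Hs [[t [Ht ->]] _]; rewrite scaler_suml scaler_sumr big_seq.
apply: submod_sum => // q /Ht [Kq Lq].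
have -> : a *: ((q.1 * q.2) *: p.2) = q.2 *: ((a * q.1) *: p.2).
  by rewrite !scalerA [q.2 * _]mulrC mulrA.
by apply: mod_mul_single => //; apply: mod_mul_single => //; apply: ideal_mul_single.
Qed.

Lemma H0_deg0_lift_submod I : is_ideal I -> is_submod (H0_deg0_lift I : M -> Prop).
Proof.
move=> HI; have Psub n := mod_mul_submod (total : M -> Prop) (ideal_pow_ideal n.+1 HI).
split.
- by exists 0%N => n _ a _; rewrite scaler0; case: (Psub n).
- move=> x y [k1 h1] [k2 h2]; exists (maxn k1 k2) => n kn a Ia.
  rewrite scalerDr; have [_ PD _] := Psub n.
  by apply: PD; [apply: h1 | apply: h2] => //; apply: leq_trans kn;
    rewrite ?leq_maxl ?leq_maxr.
- move=> c x [k h]; exists k => n kn a Ia; rewrite scalerA mulrC -scalerA.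
  by have [_ _ PZ] := Psub n; apply: PZ; apply: h.
Qed.

Lemma mod_mul_H0_deg0_lift I x : is_ideal I -> mod_mul I total x -> H0_deg0_lift I x.
Proof.
move=> HI; apply: mod_mul_sub; first exact: H0_deg0_lift_submod.
move=> c v Ic _; exists 0%N => n _ a Ia; rewrite scalerA.
by apply: mod_mul_single => //; apply: ideal_mul_single.
Qed.

End Modules.

Section Nakayama.
Variables (A : comNzRingType) (M : lmodType A) (m : A -> Prop).
Hypotheses (Hn : noetherian_ring A) (Hl : local_ring m).

Lemma lin_comb_nakayama (s : seq M) :
  (forall v, v \in s -> lin_comb m s v) -> forall v, v \in s -> v = 0.
Proof.
have [[[[m0 mD mM] _] _] _] := Hl.
elim: s => [|x s IH] Hs //.
have [c0 [mc0 hx0]] := Hs x (mem_head _ _).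
have [e he] := local_unit_1B Hn Hl (mc0 x).
have hx : x = \sum_(u <- s) (e * c0 u) *: u.
  have -> : \sum_(u <- s) (e * c0 u) *: u = e *: ((1 - c0 x) *: x).
    rewrite scalerBl scale1r {1}hx0 big_cons addrAC subrr add0r scaler_sumr.
    by apply: eq_bigr => u _; rewrite scalerA.
  by rewrite scalerA he scale1r.
have s0 : forall v, v \in s -> v = 0.
  apply: IH => v vs.
  have [cv [mcv hv]] := Hs v (mem_behead (vs : v \in behead (x :: s))).
  rewrite big_cons {2}hx scaler_sumr -big_split /= in hv.
  exists (fun u => cv x * (e * c0 u) + cv u); split.
    by move=> u; apply: mD (mM _ _ (mM _ _ (mc0 u))) (mcv u).
  by rewrite hv; apply: eq_bigr => u _; rewrite scalerA scalerDl.
move=> v; rewrite inE => /orP [/eqP -> | /s0 //].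
by rewrite hx big_seq big1 // => u /s0 ->; rewrite scaler0.
Qed.

Lemma mod_mul_nakayama K :
  finitely_generated_module M -> is_ideal K ->
  (forall x : M, mod_mul K total x -> mod_mul m (mod_mul K total) x) ->
  forall x : M, mod_mul K total x -> x = 0.
Proof.
move=> Hg HK KM_sub.
have Hm : is_ideal m by case: Hl => [[[]]].
have [_ _ mM] := Hm.
have [S [spanS SK]] := mod_mul_fg_span (Hn HK) Hg.
have S0 : forall v, v \in S -> v = 0.
  apply: lin_comb_nakayama => v /SK /KM_sub.
  apply: mod_mul_sub; first exact: lin_comb_submod.
  by move=> a r ma /spanS; apply: lin_comb_scale => c; rewrite mulrC; apply: mM.
by move=> x /spanS; apply: lin_comb_zero.
Qed.

End Nakayama.

Section Dimension.
Variables (A : comNzRingType) (M : lmodType A) (m I : A -> Prop).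
Hypotheses (Hn : noetherian_ring A) (Hl : local_ring m).
Hypothesis Hg : finitely_generated_module M.

(* [H0_deg0_lift I x] unfolds to [exists k, killed_from k x]. *)
Definition killed_from (k : nat) (x : M) : Prop :=
  forall n, (k <= n)%N -> forall a, ideal_pow I n a ->
    mod_mul (ideal_pow I n.+1) total (a *: x).

Lemma mpow_sub_H0_annihilated b j : (j < b)%N ->
  (forall x : M, mod_mul I total x -> mod_mul (ideal_pow m b) total x) ->
  (forall x : M, mod_mul (ideal_pow m j) total x ->
     mod_add (H0_deg0_lift I) (mod_mul (ideal_pow m j.+1) total) x) ->
  exists n, forall x : M,
    mod_mul (ideal_mul (ideal_pow I n) (ideal_pow m j)) total x -> x = 0.
Proof.
move=> jb IM_sub Hdec.
have Hm : is_ideal m by case: Hl => [[[]]].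
have [S [spanS SQ]] := mod_mul_fg_span (Hn (ideal_pow_ideal j Hm)) Hg.
have [n Hnb] : exists n, forall u, u \in S ->
    mod_add (killed_from n) (mod_mul (ideal_pow m j.+1) total) u.
  apply: bound_over_seq => [u k k' kk' [w [z [-> [hw hz]]]] | u /SQ /Hdec].
    by exists w, z; split=> //; split=> // n' /(leq_trans kk'); apply: hw.
  by move=> [w [z [-> [[k hw] hz]]]]; exists k, w, z.
exists n; set R := mod_mul (ideal_mul (ideal_pow I n) (ideal_pow m j)) total.
have mR_submod : is_submod (mod_mul m R) by apply: mod_mul_submod.
have [_ mRD mRZ] := mR_submod.
have mR_low a z : ideal_pow I n a -> mod_mul (ideal_pow m j.+1) total z ->
    mod_mul m R (a *: z).
  exact: mod_mul_scale_mul.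
have mR_high w : mod_mul (ideal_pow I n.+1) total w -> mod_mul m R w.
  apply: (mod_mul_ideal_mul_sub mR_submod) => a c v Ia Ic _; apply: mR_low => //.
  apply: (mod_mul_mono _ (IM_sub _ (mod_mul_single Ic Logic.I))) => x.
  exact: ideal_pow_decr Hm jb.
apply: (mod_mul_nakayama Hn Hl Hg (ideal_mul_ideal _ (ideal_pow_ideal j Hm))).
move=> x Rx; apply: (mod_mul_ideal_mul_sub mR_submod _ Rx) => a c v Ia mc _.
have [d [_ ->]] := spanS (c *: v) (mod_mul_single mc Logic.I).
rewrite scaler_sumr big_seq; apply: submod_sum => // u /Hnb [w [z [-> [hw hz]]]].
rewrite scalerA mulrC -scalerA scalerDr; apply: mRZ; apply: mRD; last exact: mR_low.
exact/mR_high/hw.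
Qed.

Lemma annihilated_mpow_nil n j :
  primary_to I m ->
  (forall x : M, mod_mul (ideal_mul (ideal_pow I n) (ideal_pow m j)) total x -> x = 0) ->
  forall y, m y -> exists k, ann_mod M (y ^+ k).
Proof.
move=> [_ m_rad] Hann y my; have [t It] := (m_rad y).1 my.
exists (t * n + j)%N => x; apply: Hann; rewrite exprD exprM.
by apply: mod_mul_single => //; apply: ideal_mul_single; apply: ideal_pow_exp.
Qed.

Lemma nil_mod_ann_no_supp_chain1 :
  (forall y, m y -> exists k, ann_mod M (y ^+ k)) -> ~ supp_chain M 1.
Proof.
move=> Hnil [P [HP Hchain]].
have [[P0_prime P0_ann] [P1_prime _]] := (HP 0%N isT, HP 1%N isT).
have [_ [y [P1y nP0y]]] := Hchain 0%N isT.
have [k yk] := Hnil y (proper_ideal_sub_local Hn Hl P1_prime.1 P1y).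
exact/nP0y/(prime_ideal_pow P0_prime)/P0_ann.
Qed.

End Dimension.

Theorem lemma2p7 (A : comNzRingType) (m I : A -> Prop) (M : lmodType A) (b : nat) :
  noetherian_ring A ->
  local_ring m ->
  infinite_residue_field m ->
  primary_to I m ->
  finitely_generated_module M ->
  dim_mod_eq M 1 ->
  (0 < b)%N ->
  (forall x : M, mod_mul I (fun _ => True) x ->
                 mod_mul (ideal_pow m b) (fun _ => True) x) ->
  hbar0_ge M I b.
Proof.
move=> Hn Hl _ Hpr Hg [Hdim _] _ IM_sub.
have HI : is_ideal I by case: Hpr.
have Hm : is_ideal m by case: Hl => [[[]]].
have H0_submod := H0_deg0_lift_submod M HI.
pose N i : M -> Prop := mod_add (H0_deg0_lift I) (mod_mul (ideal_pow m (b - i)) total).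
exists N; split=> [i _ | i ib].
  have mpow_submod := mod_mul_submod (total : M -> Prop) (ideal_pow_ideal (b - i) Hm).
  split; first exact: mod_add_submod.
  move=> x Wx; exists x, 0; rewrite addr0; split=> //; split; last by case: mpow_submod.
  by case: Wx => //; apply: mod_mul_H0_deg0_lift.
split=> [x [w [z [-> [hw hz]]]] |].
  exists w, z; split=> //; split=> //; apply: mod_mul_mono hz => a.
  exact: ideal_pow_decr Hm (leq_sub2l _ _).
apply: NNPP => not_strict.
have Hdec (x : M) : mod_mul (ideal_pow m (b - i.+1)) total x ->
    mod_add (H0_deg0_lift I) (mod_mul (ideal_pow m (b - i.+1).+1) total) x.
  rewrite subnSK // => hx; apply: NNPP => nx; apply: not_strict; exists x; split=> //.
  by exists 0, x; rewrite add0r; split=> //; split=> //; case: H0_submod.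
have jb : (b - i.+1 < b)%N by lia.
have [n Hann] := mpow_sub_H0_annihilated Hn Hl Hg jb IM_sub Hdec.
apply: (nil_mod_ann_no_supp_chain1 Hn Hl) Hdim.
exact: annihilated_mpow_nil Hpr Hann.
Qed.
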